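(* If a (possibly randomized) adversarial no-regret algorithm satisfies $R_i(T)\le B$ with probability $1-\delta$ against any adversary, then with probability $1-\delta$ it also satisfies $R_i(t)\le B$ simultaneously for all $t\le T$, against any adversary.
   Context: Online learning: at each timestep $t$ the learner picks a strategy $\mathbf{x}^t$ from a compact convex set $\mathcal{X}\subset\mathbb{R}^m$ (or an action sampled from it) and an adaptive adversary picks a bounded linear utility vector $\mathbf{u}^t$. $R_i(t)$ denotes the learner's regret after the first $t$ timesteps, i.e. $\max_{\mathbf{x}\in\mathcal{X}}\sum_{\tau=1}^t\langle\mathbf{u}^\tau,\mathbf{x}-\mathbf{x}^\tau\rangle$ (or its realized-action analogue). The adversary is allowed to choose the zero utility vector. *)

From HB Require Import structures.
From mathcomp Require Import all_boot all_order all_algebra.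
From mathcomp Require Import all_classical all_reals all_analysis.
Set Implicit Arguments. Unset Strict Implicit. Unset Printing Implicit Defensive.
Import Order.TTheory GRing.Theory Num.Theory.
Import numFieldNormedType.Exports.
Local Open Scope classical_set_scope.
Local Open Scope ring_scope.

Definition dotv (R : realType) (m : nat) (u x : 'rV[R]_m) : R :=
  \sum_(i < m) u ord0 i * x ord0 i.

Definition convexS (R : realType) (m : nat) (X : set 'rV[R]_m) : Prop :=
  forall x y l, X x -> X y -> 0 <= l <= 1 -> X (l *: x + (1 - l) *: y).

(* A history: the list of past rounds (strategy x^s, utility u^s), oldest first. *)
Definition history (R : realType) (m : nat) := seq ('rV[R]_m * 'rV[R]_m).

(* A (possibly randomized) learner: given its random seed w and the past
   history, it outputs the strategy (or realized action, as a point of X)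
   for the current round. *)
Definition learner (R : realType) (m : nat) (Omega : Type) :=
  Omega -> history R m -> 'rV[R]_m.

Definition adversary (R : realType) (m : nat) := history R m -> 'rV[R]_m.

Fixpoint play (R : realType) (m : nat) (Omega : Type)
  (L : learner R m Omega) (A : adversary R m) (w : Omega) (t : nat)
  : history R m :=
  match t with
  | 0 => [::]
  | t'.+1 => let h := play L A w t' in rcons h (L w h, A h)
  end.

Definition regret (R : realType) (m : nat) (Omega : Type) (X : set 'rV[R]_m)
  (L : learner R m Omega) (A : adversary R m) (w : Omega) (t : nat) : R :=
  sup [set (\sum_(p <- play L A w t) dotv p.2 (x - p.1)) | x in X].

From HB Require Import structures.
From mathcomp Require Import all_boot all_order all_algebra.
From mathcomp Require Import all_classical all_reals all_analysis.
Set Implicit Arguments. Unset Strict Implicit. Unset Printing Implicit Defensive.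
Import Order.TTheory GRing.Theory Num.Theory.
Import numFieldNormedType.Exports.
Local Open Scope classical_set_scope.
Local Open Scope ring_scope.

(* Given an adversary A, let the stopped adversary play A until the regret of
   the history played so far first exceeds B, and the zero utility afterwards.
   Zero utilities leave the regret unchanged, so on every seed w on which the
   regret against A exceeds B at some t <= T, the regret against the stopped
   adversary at time T equals the regret against A at the first exceedance
   time, hence exceeds B as well.  Thus the event "regret <= B at T" against
   the stopped adversary is contained in the event "regret <= B at all t <= T"
   against A, and the high-probability bound transfers. *)

Section HistoryRegret.
Variables (R : realType) (m : nat) (X : set 'rV[R]_m).

Definition hist_regret (h : history R m) : R :=
  sup [set (\sum_(p <- h) dotv p.2 (x - p.1)) | x in X].

Lemma regretE (Omega : Type) (L : learner R m Omega) A w t :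
  regret X L A w t = hist_regret (play L A w t).
Proof. by []. Qed.

Lemma dotv0l (x : 'rV[R]_m) : dotv 0 x = 0.
Proof. by rewrite /dotv big1 // => i _; rewrite mxE mul0r. Qed.

Lemma hist_regret_rcons0 (h : history R m) a :
  hist_regret (rcons h (a, 0)) = hist_regret h.
Proof.
rewrite /hist_regret; congr sup; apply: eq_imagel => x _.
by rewrite -cats1 big_cat big_seq1 /= dotv0l addr0.
Qed.

End HistoryRegret.

Section Play.
Variables (R : realType) (m : nat) (Omega : Type).
Variables (L : learner R m Omega) (A : adversary R m) (w : Omega).

Lemma playS t :
  play L A w t.+1 = rcons (play L A w t) (L w (play L A w t), A (play L A w t)).
Proof. by []. Qed.

Lemma size_play t : size (play L A w t) = t.
Proof. by elim: t => // t IH; rewrite playS size_rcons IH. Qed.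

Lemma take_play k t : take k (play L A w t) = play L A w (minn k t).
Proof.
elim: t => [|t IH]; first by rewrite minn0.
have [kt|tk] := leqP k t.
  by rewrite playS -cats1 takel_cat ?size_play // IH !(minn_idPl _) // ltnW.
by rewrite take_oversize ?size_play // (minn_idPr _).
Qed.

End Play.

Section StoppedAdversary.
Variables (R : realType) (m : nat) (X : set 'rV[R]_m) (B : R).

Definition exceeds (h : history R m) : Prop :=
  exists k, B < hist_regret X (take k h).

Definition stop_adversary (A : adversary R m) : adversary R m :=
  fun h => if `[< exceeds h >] then 0 else A h.

Lemma stop_adversary_in (U : set 'rV[R]_m) (A : adversary R m) :
  U 0 -> (forall h, U (A h)) -> forall h, U (stop_adversary A h).
Proof. by move=> U0 UA h; rewrite /stop_adversary; case: asboolP. Qed.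

Variables (Omega : Type) (L : learner R m Omega) (A : adversary R m).
Variables (w : Omega) (t0 : nat).
Hypothesis exceeds_t0 : B < regret X L A w t0.
Hypothesis first_t0 : forall k, B < regret X L A w k -> (t0 <= k)%N.

Lemma play_stop_adversary_le s : (s <= t0)%N ->
  play L (stop_adversary A) w s = play L A w s.
Proof.
elim: s => [//|s IH] lt_s_t0.
rewrite !playS IH ?(ltnW lt_s_t0) //; congr (rcons _ (_, _)).
rewrite /stop_adversary; case: asboolP => // -[k].
rewrite take_play -regretE => /first_t0 le_t0_ks.
by move: (leq_trans le_t0_ks (geq_minr k s)); rewrite leqNgt lt_s_t0.
Qed.

Lemma regret_stop_adversary_ge s : (t0 <= s)%N ->
  regret X L (stop_adversary A) w s = regret X L A w t0.
Proof.
elim: s => [|s IH]; first by rewrite leqn0 => /eqP->; rewrite regretE.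
rewrite leq_eqVlt => /orP[/eqP<-|]; first by rewrite regretE play_stop_adversary_le.
rewrite ltnS => le_t0_s; rewrite regretE playS -IH //.
suff -> : stop_adversary A (play L (stop_adversary A) w s) = 0.
  exact: hist_regret_rcons0.
rewrite /stop_adversary; case: asboolP => // -[]; exists t0.
by rewrite take_play (minn_idPl _) // play_stop_adversary_le.
Qed.

End StoppedAdversary.

Lemma regret_stop_adversary_bound (R : realType) (m : nat) (X : set 'rV[R]_m)
    (B : R) (Omega : Type) (L : learner R m Omega) (A : adversary R m) w T :
  regret X L (stop_adversary X B A) w T <= B ->
  forall t, (t <= T)%N -> regret X L A w t <= B.
Proof.
move=> le_T_B t le_t_T; rewrite leNgt; apply/negP => exceeds_t.
have some_excess : exists t, B < regret X L A w t by exists t.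
have [t0 exceeds_t0 first_t0] := ex_minnP some_excess.
have le_t0_T : (t0 <= T)%N by apply: leq_trans (first_t0 _ exceeds_t) le_t_T.
move: le_T_B; rewrite (regret_stop_adversary_ge exceeds_t0 first_t0 le_t0_T).
by rewrite leNgt exceeds_t0.
Qed.

Lemma measurable_regret_upto (R : realType) (d : measure_display)
    (Omega : measurableType d) (m : nat) (X : set 'rV[R]_m)
    (L : learner R m Omega) (A : adversary R m) (B : R) (T : nat) :
  (forall t, measurable [set w | regret X L A w t <= B]) ->
  measurable [set w | forall t, (t <= T)%N -> regret X L A w t <= B].
Proof.
move=> mregret.
apply: (@bigcap_measurableType _ _ (fun t => [set w | regret X L A w t <= B])).
by move=> t _; exact: mregret.
Qed.

Theorem proposition3p1 (R : realType) (d : measure_display)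
  (Omega : measurableType d) (P : probability Omega R)
  (m : nat) (X : set 'rV[R]_m) (U : set 'rV[R]_m)
  (L : learner R m Omega) (T : nat) (B delta : R) :
  compact X -> X !=set0 -> convexS X ->
  bounded_set U -> U 0 ->
  (forall w h, X (L w h)) ->
  (forall (A : adversary R m) t, (forall h, U (A h)) ->
     measurable [set w | regret X L A w t <= B]) ->
  (forall A : adversary R m, (forall h, U (A h)) ->
     ((1 - delta)%:E <= P [set w | (regret X L A w T <= B)%R])%E) ->
  forall A : adversary R m, (forall h, U (A h)) ->
    ((1 - delta)%:E <=
       P [set w | forall t, (t <= T)%N -> (regret X L A w t <= B)%R])%E.
Proof.
move=> _ _ _ _ U0 _ mregret high_prob A UA.
have U_stop := stop_adversary_in X B U0 UA.
apply: le_trans (high_prob _ U_stop) _.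
apply: le_measure; rewrite ?inE.
- exact: mregret.
- by apply: measurable_regret_upto => t; exact: mregret.
- by move=> w; exact: regret_stop_adversary_bound.
Qed.
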